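(* Let $A\in\mathcal{C}_n$ and $i,j\in\{1,\dots,n\}$. Then $A$ is irreducible with respect to $E_{ij}$ if and only if there exists a minimal zero $u$ of $A$ such that $(Au)_i=(Au)_j=0$ and $u_i+u_j>0$.
   Context: $\mathcal{C}_n$ denotes the cone of copositive matrices: real symmetric $n\times n$ matrices $A$ with $x^TAx\ge 0$ for all $x\in\mathbb{R}^n_+$. $E_{ij}$ is the $n\times n$ matrix with entries 1 at positions $(i,j)$ and $(j,i)$ and 0 elsewhere. For $\mathcal{M}\subset\mathcal{C}_n$ (or a single matrix $M$), $A$ is irreducible with respect to $\mathcal{M}$ if there do not exist $\gamma>0$ and $M\in\mathcal{M}\setminus\{0\}$ with $A-\gamma M\in\mathcal{C}_n$. A zero of $A$ is a nonzero $u\in\mathbb{R}^n_+$ with $u^TAu=0$; $\operatorname{Supp}(u)=\{i:u_i\ne0\}$; a zero $u$ is minimal if there is no zero $v$ with $\operatorname{Supp}(v)\subsetneq\operatorname{Supp}(u)$. *)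

From HB Require Import structures.
From mathcomp Require Import all_boot all_order all_algebra.
Set Implicit Arguments. Unset Strict Implicit. Unset Printing Implicit Defensive.
Import Order.TTheory GRing.Theory Num.Theory.
Local Open Scope ring_scope.

Definition nonneg_vec (R : realFieldType) (n : nat) (x : 'cV[R]_n) : Prop :=
  forall k, 0 <= x k 0.

Definition qform (R : realFieldType) (n : nat) (A : 'M[R]_n) (x : 'cV[R]_n) : R :=
  (x^T *m A *m x) 0 0.

Definition copositive (R : realFieldType) (n : nat) (A : 'M[R]_n) : Prop :=
  A^T = A /\ forall x : 'cV[R]_n, nonneg_vec x -> 0 <= qform A x.

Definition Eij (R : realFieldType) (n : nat) (i j : 'I_n) : 'M[R]_n :=
  \matrix_(k, l) (((k == i) && (l == j)) || ((k == j) && (l == i)))%:R.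

Definition irreducible_wrt (R : realFieldType) (n : nat) (A M : 'M[R]_n) : Prop :=
  ~ exists gamma : R, 0 < gamma /\ copositive (A - gamma *: M).

Definition supp (R : realFieldType) (n : nat) (u : 'cV[R]_n) : {set 'I_n} :=
  [set k | u k 0 != 0].

Definition is_zero_of (R : realFieldType) (n : nat) (A : 'M[R]_n) (u : 'cV[R]_n) : Prop :=
  u != 0 /\ nonneg_vec u /\ qform A u = 0.

Definition is_minimal_zero (R : realFieldType) (n : nat) (A : 'M[R]_n) (u : 'cV[R]_n) : Prop :=
  is_zero_of A u /\ ~ exists v : 'cV[R]_n, is_zero_of A v /\ supp v \proper supp u.

(* A zero u of A with (Au)_i = (Au)_j = 0 and u_i + u_j > 0 obstructs every
   A - g E_ij with g > 0: u is a zero of A - g E_ij as well, so the gradient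
   (A - g E_ij) u must be nonnegative, but its entries i and j are -g u_j and -g u_i.

   Conversely, if A is irreducible, each A - g E_ij has a nonnegative x with a
   negative form.  Shrinking the support of x to a minimal S, the principal system
   ((A - g E_ij) y)_k = -1 on S, y = 0 off S, is regular with a nonnegative
   solution, and by pigeonhole one S serves arbitrarily small g.  The limit g -> 0
   is not available over an arbitrary real field; instead, by Cramer's rule
   det(g)^2 y(g) is a polynomial vector p(g) whose lowest-order coefficient vector
   w is a zero of A with Aw = 0 on S.  Comparing w^T A y with the equations for y
   then shows that E_ij joins two indices of S, which gives (Aw)_i = (Aw)_j = 0 and
   w_i + w_j > 0.  Finally, such a zero is shrunk to a minimal one: given a zero v
   of smaller support, either v is again such a zero or so is u - t v for the
   largest admissible t. *)

From HB Require Import structures.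
From mathcomp Require Import all_boot all_order all_algebra.
From mathcomp Require Import ring lra zify.
From Stdlib Require Import Classical.
Set Implicit Arguments. Unset Strict Implicit. Unset Printing Implicit Defensive.
Import Order.TTheory GRing.Theory Num.Theory.
Local Open Scope ring_scope.

Section LowestOrder.
Variable R : realFieldType.
Implicit Types (p q r : {poly R}) (G : R -> Prop).

Definition vanish_below p m := forall a, (a < m)%N -> p`_a = 0.

Definition arbitrarily_small G := forall d, 0 < d -> exists g, [/\ 0 < g, g < d & G g].

Lemma vanish_below_factor {p m} : vanish_below p m -> p = drop_poly m p * 'X^m.
Proof.
move=> p_low; rewrite -{1}(poly_take_drop m p).
suff -> : take_poly m p = 0 by rewrite add0r.
by apply/polyP => a; rewrite coef_take_poly coef0; case: ifP => // /p_low.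
Qed.

Lemma vanish_belowM {p q m1 m2} : vanish_below p m1 -> vanish_below q m2 ->
  vanish_below (p * q) (m1 + m2) /\ (p * q)`_(m1 + m2) = p`_m1 * q`_m2.
Proof.
move=> p_low q_low.
have -> : p * q = (drop_poly m1 p * drop_poly m2 q) * 'X^(m1 + m2).
  by rewrite {1}(vanish_below_factor p_low) {1}(vanish_below_factor q_low) exprD; ring.
split; first by move=> a a_lt; rewrite coefMXn a_lt.
by rewrite coefMXn ltnn subnn coef0M !coef_drop_poly !add0n.
Qed.

Lemma norm_horner_le p g : 0 <= g -> g <= 1 -> `|p.[g]| <= \sum_(a < size p) `|p`_a|.
Proof.
move=> g_ge0 g_le1; rewrite horner_coef; apply: le_trans (ler_norm_sum _ _ _) _.
apply: ler_sum => a _; rewrite normrM normrX (ger0_norm g_ge0).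
by apply: ler_piMr; [exact: normr_ge0 | exact: exprn_ile1].
Qed.

Lemma horner_lt0_near0 q : q`_0 < 0 ->
  exists2 d, 0 < d & forall g, 0 < g -> g < d -> q.[g] < 0.
Proof.
move=> q0_lt0; set r := drop_poly 1 q.
have qE g : q.[g] = q`_0 + r.[g] * g.
  rewrite -{1}(poly_take_drop 1 q) hornerD expr1 hornerMX.
  suff -> : take_poly 1 q = (q`_0)%:P by rewrite hornerC.
  by apply/polyP => a; rewrite coef_take_poly coefC; case: a.
set M := \sum_(a < size r) `|r`_a|.
have M_ge0 : 0 <= M by apply: sumr_ge0 => a _; exact: normr_ge0.
exists (Num.min 1 (- q`_0 / (M + 1))).
  by rewrite lt_min ltr01 /= divr_gt0 // ?oppr_gt0 // ltr_pwDr.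
move=> g g_gt0; rewrite lt_min => /andP [g_lt1 g_lt].
have rg_le : r.[g] * g <= M * g.
  apply: ler_wpM2r; first exact: ltW.
  by apply: le_trans (ler_norm _) _; exact: norm_horner_le (ltW g_gt0) (ltW g_lt1).
have : g * (M + 1) < - q`_0 by rewrite -ltr_pdivlMr // ltr_pwDr.
rewrite qE; nra.
Qed.

Lemma lowest_coef_ge0 {p m G} : arbitrarily_small G ->
  (forall g, G g -> 0 <= p.[g]) -> vanish_below p m -> 0 <= p`_m.
Proof.
move=> G_small p_ge0 p_low; rewrite leNgt; apply/negP => pm_lt0.
have [d d_gt0 q_lt0] : exists2 d, 0 < d & forall g, 0 < g -> g < d -> (drop_poly m p).[g] < 0.
  by apply: horner_lt0_near0; rewrite coef_drop_poly add0n.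
have [g [g_gt0 g_lt /p_ge0]] := G_small d d_gt0.
rewrite (vanish_below_factor p_low) hornerM hornerXn leNgt => /negP; apply.
by rewrite pmulr_llt0 ?exprn_gt0 // q_lt0.
Qed.

Lemma lowest_common_order (I : finType) (p : I -> {poly R}) G : arbitrarily_small G ->
  (forall g k, G g -> 0 <= (p k).[g]) -> \sum_k p k != 0 ->
  exists m, [/\ forall k, vanish_below (p k) m, forall k, 0 <= (p k)`_m
              & 0 < (\sum_k p k)`_m].
Proof.
move=> G_small p_ge0 sum_neq0; set Q := \sum_k p k.
have [m Qm_neq0 Qm_min] : exists2 m, Q`_m != 0 & forall a, Q`_a != 0 -> (m <= a)%N.
  have Q_nz : exists m, Q`_m != 0 by exists (size Q).-1; rewrite -lead_coefE lead_coef_eq0.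
  by case: (ex_minnP Q_nz) => m; exists m.
have Q_low : vanish_below Q m.
  move=> a a_lt; apply/eqP/negPn/negP => /Qm_min; by rewrite leqNgt a_lt.
have coef_ge0 a : (forall k, vanish_below (p k) a) -> forall k, 0 <= (p k)`_a.
  by move=> low k; exact: lowest_coef_ge0 G_small (fun g Gg => p_ge0 g k Gg) (low k).
have low a : (a < m)%N -> forall k, vanish_below (p k) a.+1.
  elim/ltn_ind: a => a IH a_lt k b; rewrite ltnS leq_eqVlt => /orP [/eqP -> | b_lt].
    have low_a l : vanish_below (p l) a.
      by move=> c c_lt; apply: (IH c) => //; apply: ltn_trans a_lt.
    have := Q_low a a_lt; rewrite /Q coef_sum => /psumr_eq0P; apply=> // l _.
    exact: coef_ge0.
  by apply: (IH b) => //; apply: ltn_trans a_lt.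
have low_m k : vanish_below (p k) m.
  by move=> a a_lt; apply: (low a a_lt).
exists m; split => //; first exact: coef_ge0.
by rewrite lt0r Qm_neq0 /Q coef_sum sumr_ge0 // => k _; exact: coef_ge0.
Qed.

Lemma vanish_below_dominated (Q r D : {poly R}) m G : arbitrarily_small G ->
  vanish_below Q m -> 0 < Q`_m -> vanish_below r (m + m) ->
  (forall g, G g -> 0 <= D.[g]) -> (forall g, G g -> 0 <= ('X * r - D * Q).[g]) ->
  vanish_below D m.+1.
Proof.
move=> G_small Q_low Qm_gt0 r_low D_ge0 dom.
elim/ltn_ind => l IH; rewrite ltnS => l_le.
have D_low : vanish_below D l.
  by move=> a a_lt; apply: IH => //; rewrite ltnS ltnW // (leq_trans a_lt).
have Dl_ge0 : 0 <= D`_l := lowest_coef_ge0 G_small D_ge0 D_low.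
have [DQ_low DQ_coef] := vanish_belowM D_low Q_low.
have Xr_low c : (c <= l + m)%N -> ('X * r)`_c = 0.
  by move=> c_le; rewrite coefXM; case: eqP => // /eqP c_neq0; apply: r_low; lia.
have dom_low : vanish_below ('X * r - D * Q) (l + m).
  by move=> c c_lt; rewrite coefB Xr_low ?DQ_low ?subr0 // ltnW.
have := lowest_coef_ge0 G_small dom dom_low.
rewrite coefB Xr_low // DQ_coef sub0r oppr_ge0 pmulr_lle0 // => Dl_le0.
exact/le_anti/andP.
Qed.

Lemma arbitrarily_small_pigeonhole (T : finType) (G : T -> R -> Prop) :
  (forall g, 0 < g -> exists S, G S g) -> exists S, arbitrarily_small (G S).
Proof.
move=> cover; apply: NNPP => no_S.
have gap S : exists2 d, 0 < d & forall g, 0 < g -> g < d -> ~ G S g.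
  apply: NNPP => no_gap; apply: no_S; exists S => d d_gt0.
  apply: NNPP => no_g; apply: no_gap; exists d => // g g_gt0 g_lt GSg.
  by apply: no_g; exists g.
have [d d_gt0 gap_all] : exists2 d, 0 < d &
    forall S, S \in enum T -> forall g, 0 < g -> g < d -> ~ G S g.
  elim: (enum T) => [|S s [d1 d1_gt0 gap1]]; first by exists 1.
  have [d2 d2_gt0 gap2] := gap S.
  exists (Num.min d1 d2); first by rewrite lt_min d1_gt0.
  move=> S'; rewrite in_cons => /orP [/eqP -> | S's] g g_gt0;
    rewrite lt_min => /andP [g_lt1 g_lt2]; [exact: gap2 | exact: gap1].
have d2_gt0 : 0 < d / 2 by rewrite divr_gt0.
have [S GS] := cover _ d2_gt0.
apply: (gap_all S _ (d / 2)) => //; first by rewrite mem_enum.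
by rewrite ltr_pdivrMr // ltr_pMr // ltr1n.
Qed.

End LowestOrder.

Section Entries.
Variable R : pzRingType.

Lemma entryD p q (M N : 'M[R]_(p, q)) k l : (M + N) k l = M k l + N k l.
Proof. by rewrite !mxE. Qed.

Lemma entryB p q (M N : 'M[R]_(p, q)) k l : (M - N) k l = M k l - N k l.
Proof. by rewrite !mxE. Qed.

Lemma entryZ p q a (M : 'M[R]_(p, q)) k l : (a *: M) k l = a * M k l.
Proof. by rewrite !mxE. Qed.

End Entries.

Section Forms.
Variables (R : realFieldType) (n : nat).
Implicit Types (A B : 'M[R]_n) (u v w x y z : 'cV[R]_n).

Definition bform A x y := \sum_k x k 0 * (A *m y) k 0.

Lemma qformE A x : qform A x = bform A x x.
Proof. by rewrite /qform /bform -mulmxA mxE; apply: eq_bigr => k _; rewrite mxE. Qed.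

Lemma bformC A x y : A^T = A -> bform A x y = bform A y x.
Proof.
move=> A_sym; rewrite /bform.
under eq_bigr do rewrite mxE big_distrr /=.
under [RHS]eq_bigr do rewrite mxE big_distrr /=.
rewrite exchange_big /=; apply: eq_bigr => k _; apply: eq_bigr => l _.
by rewrite -[in RHS]A_sym mxE; ring.
Qed.

Lemma bformDl A x y z : bform A (x + y) z = bform A x z + bform A y z.
Proof. by rewrite /bform -big_split; apply: eq_bigr => k _; rewrite entryD mulrDl. Qed.

Lemma bformDr A x y z : bform A x (y + z) = bform A x y + bform A x z.
Proof. by rewrite /bform -big_split; apply: eq_bigr => k _; rewrite mulmxDr entryD mulrDr. Qed.

Lemma bformZl A a x y : bform A (a *: x) y = a * bform A x y.
Proof. by rewrite /bform mulr_sumr; apply: eq_bigr => k _; rewrite entryZ mulrA. Qed.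

Lemma bformZr A a x y : bform A x (a *: y) = a * bform A x y.
Proof. by rewrite /bform mulr_sumr; apply: eq_bigr => k _; rewrite -scalemxAr entryZ mulrCA. Qed.

Lemma bformNl A x y : bform A (- x) y = - bform A x y.
Proof. by rewrite -scaleN1r bformZl mulN1r. Qed.

Lemma bformNr A x y : bform A x (- y) = - bform A x y.
Proof. by rewrite -scaleN1r bformZr mulN1r. Qed.

Lemma bformBl A x y z : bform A (x - y) z = bform A x z - bform A y z.
Proof. by rewrite bformDl bformNl. Qed.

Lemma bformBr A x y z : bform A x (y - z) = bform A x y - bform A x z.
Proof. by rewrite bformDr bformNr. Qed.

Lemma bform0l A y : bform A 0 y = 0.
Proof. by rewrite -(scale0r 0) bformZl mul0r. Qed.

Lemma bform_mxB A B x y : bform (A - B) x y = bform A x y - bform B x y.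
Proof. by rewrite /bform -sumrB; apply: eq_bigr => k _; rewrite mulmxBl entryB mulrBr. Qed.

Lemma bform_mxZ a A x y : bform (a *: A) x y = a * bform A x y.
Proof. by rewrite /bform mulr_sumr; apply: eq_bigr => k _; rewrite -scalemxAl entryZ mulrCA. Qed.

Lemma bform_line A x y t : A^T = A ->
  bform A (x + t *: y) (x + t *: y) = bform A x x + 2 * t * bform A x y + t * t * bform A y y.
Proof. by move=> A_sym; rewrite bformDl !bformDr !bformZl !bformZr (bformC y x A_sym); ring. Qed.

Lemma bform_add_orth A y z c : A^T = A -> bform A z y = 0 ->
  bform A (c *: y + z) (c *: y + z) = c * c * bform A y y + bform A z z.
Proof.
by move=> A_sym zy; rewrite bformDl !bformDr !bformZl !bformZr (bformC y z A_sym) zy; ring.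
Qed.

Lemma bform_deltal A k y : bform A (delta_mx k 0) y = (A *m y) k 0.
Proof.
rewrite /bform (bigD1 k) //= big1 ?addr0; first by rewrite mxE !eqxx mul1r.
by move=> l /negbTE l_neq; rewrite mxE l_neq mul0r.
Qed.

Lemma in_supp x k : (k \in supp x) = (x k 0 != 0).
Proof. by rewrite inE. Qed.

Lemma supp_subset_eq0 x (S : {set 'I_n}) k : supp x \subset S -> k \notin S -> x k 0 = 0.
Proof. by move=> xS kS; apply/eqP/negPn; rewrite -in_supp; apply: contra kS; apply: subsetP. Qed.

Lemma bform_supp A x y (S : {set 'I_n}) c : supp x \subset S ->
  (forall k, k \in S -> (A *m y) k 0 = c) -> bform A x y = c * \sum_k x k 0.
Proof.
move=> xS Ay_in; rewrite /bform mulr_sumr; apply: eq_bigr => k _.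
case: (boolP (k \in S)) => kS; first by rewrite Ay_in // mulrC.
by rewrite (supp_subset_eq0 xS kS) mul0r mulr0.
Qed.

Lemma sum_neq0P (I : finType) (F : I -> R) : \sum_k F k != 0 -> exists k, F k != 0.
Proof.
move=> sum_neq0; apply: NNPP => F0; move/eqP: sum_neq0; apply; apply: big1 => k _.
by apply/eqP/negPn/negP => Fk; apply: F0; exists k.
Qed.

Lemma col_neq0P {x} : x != 0 -> exists k, x k 0 != 0.
Proof.
move=> x_neq0; apply: NNPP => x0; move/negP: x_neq0; apply; apply/eqP/matrixP => k l.
by rewrite ord1 mxE; apply/eqP/negPn/negP => xk; apply: x0; exists k.
Qed.

Lemma sum_col_gt0 {x} : nonneg_vec x -> x != 0 -> 0 < \sum_k x k 0.
Proof.
move=> x_ge0 /col_neq0P [k xk]; rewrite (bigD1 k) //= ltr_pwDl ?sumr_ge0 //.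
by rewrite lt0r xk x_ge0.
Qed.

Lemma sum_col_eq0_neg x : \sum_k x k 0 = 0 -> x != 0 -> exists k, x k 0 < 0.
Proof.
move=> sum0 x_neq0; apply: NNPP => no_neg.
have x_ge0 : nonneg_vec x by move=> k; rewrite leNgt; apply/negP => xk; apply: no_neg; exists k.
by have := sum_col_gt0 x_ge0 x_neq0; rewrite sum0 ltxx.
Qed.

Lemma supp_opp v : supp (- v) = supp v.
Proof. by apply/setP => k; rewrite !in_supp mxE oppr_eq0. Qed.

Lemma ray_exit x d : nonneg_vec x -> supp d \subset supp x -> (exists k, d k 0 < 0) ->
  exists2 t, 0 < t & nonneg_vec (x + t *: d) /\ supp (x + t *: d) \proper supp x.
Proof.
move=> x_ge0 dx [k1 dk1].
have x_out k : x k 0 = 0 -> d k 0 = 0.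
  move=> xk; apply/eqP/negPn/negP; rewrite -in_supp => /(subsetP dx).
  by rewrite in_supp xk eqxx.
have x_pos k : d k 0 < 0 -> 0 < x k 0.
  move=> dk; rewrite lt0r x_ge0 andbT; apply/negP => /eqP /x_out dk0.
  by rewrite dk0 ltxx in dk.
case: (@arg_minP _ _ _ k1 (fun k => d k 0 < 0) (fun k => x k 0 / - d k 0) dk1)
  => k0 dk0 k0_min.
exists (x k0 0 / - d k0 0); first by rewrite divr_gt0 ?oppr_gt0 ?x_pos.
split.
  move=> k; rewrite entryD entryZ; case: (ltrP (d k 0) 0) => dk.
    have := k0_min k dk; rewrite ler_pdivlMr ?oppr_gt0 // mulrN.
    by rewrite -[X in _ + X]opprK subr_ge0.
  rewrite addr_ge0 // mulr_ge0 // divr_ge0 // oppr_ge0; exact: ltW.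
apply/properP; split.
  apply/subsetP => k; rewrite !in_supp; apply: contraNN => /eqP xk.
  by rewrite entryD entryZ (x_out k xk) xk mulr0 addr0 eqxx.
exists k0; rewrite in_supp; first by rewrite gt_eqF ?x_pos.
by rewrite negbK entryD entryZ invrN mulrN mulNr divfK ?subrr ?ltr0_neq0.
Qed.

End Forms.

Section Zeros.
Variables (R : realFieldType) (n : nat).
Implicit Types (A : 'M[R]_n) (u v x : 'cV[R]_n).

Lemma copositive_form_ge0 A x : copositive A -> nonneg_vec x -> 0 <= bform A x x.
Proof. by move=> [_ A_ge0] /A_ge0; rewrite qformE. Qed.

Variable A : 'M[R]_n.
Hypothesis A_cop : copositive A.

Lemma zero_mulmx_ge0 u k : nonneg_vec u -> bform A u u = 0 -> 0 <= (A *m u) k 0.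
Proof.
move=> u_ge0 uAu; rewrite leNgt; apply/negP => Au_lt0.
(* along u + t e_k the form is 2 t (A u)_k + t^2 A_kk, negative for this t *)
set e := delta_mx k 0 : 'cV[R]_n.
set t := - (A *m u) k 0 / (`|A k k| + 1).
have t_gt0 : 0 < t by rewrite divr_gt0 ?oppr_gt0 // ltr_pwDr.
have t_lt : t * `|A k k| < - (A *m u) k 0.
  have tE : t * (`|A k k| + 1) = - (A *m u) k 0 by rewrite mulfVK // gt_eqF // ltr_pwDr.
  by rewrite -tE mulrDr mulr1 ltrDl.
have : 0 <= bform A (u + t *: e) (u + t *: e).
  apply: copositive_form_ge0 => // l; rewrite entryD entryZ mxE.
  by rewrite addr_ge0 // mulr_ge0 // ltW.
rewrite bform_line ?A_cop.1 // uAu (bformC _ _ A_cop.1) bform_deltal.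
rewrite bform_deltal -colE [col k A k 0]mxE.
have : t * A k k <= t * `|A k k| by apply: ler_wpM2l; [exact: ltW | exact: ler_norm].
move: t_lt t_gt0 Au_lt0; clearbody t; clear e.
move: ((A *m u) k 0) (A k k) `|A k k| => a c c'; nra.
Qed.

Lemma zero_mulmx_supp u k : nonneg_vec u -> bform A u u = 0 -> u k 0 != 0 ->
  (A *m u) k 0 = 0.
Proof.
move=> u_ge0 uAu uk.
have terms_ge0 l : 0 <= u l 0 * (A *m u) l 0 by rewrite mulr_ge0 ?zero_mulmx_ge0.
have /eqP := psumr_eq0P (fun l _ => terms_ge0 l) uAu (i := k) isT.
by rewrite mulf_eq0 (negbTE uk) => /eqP.
Qed.

Lemma bform_zero_supp u v : nonneg_vec u -> bform A u u = 0 -> supp v \subset supp u ->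
  bform A v u = 0.
Proof.
move=> u_ge0 uAu vu; rewrite /bform big1 // => k _.
case: (eqVneq (v k 0) 0) => [-> | vk]; first by rewrite mul0r.
rewrite zero_mulmx_supp ?mulr0 // -in_supp; apply: (subsetP vu).
by rewrite in_supp.
Qed.

End Zeros.

Definition ij_witness (R : realFieldType) n (A : 'M[R]_n) (i j : 'I_n) (u : 'cV[R]_n) :=
  (A *m u) i 0 = 0 /\ (A *m u) j 0 = 0 /\ 0 < u i 0 + u j 0.

Section MinimalZeros.
Variables (R : realFieldType) (n : nat) (A : 'M[R]_n) (i j : 'I_n).
Hypothesis A_cop : copositive A.
Implicit Types (u v w : 'cV[R]_n).

Lemma ij_witness_shrink u v : is_zero_of A u -> ij_witness A i j u ->
  is_zero_of A v -> supp v \proper supp u ->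
  exists2 w, is_zero_of A w /\ ij_witness A i j w & supp w \proper supp u.
Proof.
rewrite /is_zero_of !qformE => -[_ [u_ge0 uAu]] [Aui [Auj uij]] [v_neq0 [v_ge0 vAv]] vu.
have [t t_gt0 [w_ge0 wu]] : exists2 t, 0 < t &
    nonneg_vec (u + t *: - v) /\ supp (u + t *: - v) \proper supp u.
  apply: ray_exit; rewrite ?supp_opp ?proper_sub //.
  have [k vk] := col_neq0P v_neq0; exists k.
  by rewrite mxE oppr_lt0 lt0r vk v_ge0.
rewrite scalerN in w_ge0 wu; set w := u - t *: v in w_ge0 wu.
have wAw : bform A w w = 0.
  rewrite !bformBl !bformBr !bformZl !bformZr uAu vAv (bformC _ _ A_cop.1).
  by rewrite (bform_zero_supp A_cop u_ge0 uAu (proper_sub vu)) !mulr0 !subr0.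
have Aw k : (A *m w) k 0 = (A *m u) k 0 - t * (A *m v) k 0.
  by rewrite mulmxBr -scalemxAr entryB entryZ.
have Av_eq0 k : (A *m u) k 0 = 0 -> (A *m v) k 0 = 0.
  move=> Auk; apply/le_anti/andP; split; last exact: zero_mulmx_ge0.
  have := zero_mulmx_ge0 A_cop k w_ge0 wAw; rewrite Aw Auk sub0r oppr_ge0.
  by rewrite pmulr_rle0.
(* if v misses i and j, the witness is u - t v instead of v *)
case: (ltrP 0 (v i 0 + v j 0)) => vij.
  exists v => //; split; first by rewrite /is_zero_of qformE.
  by rewrite /ij_witness !Av_eq0.
have wE k : w k 0 = u k 0 - t * v k 0 by rewrite entryB entryZ.
have wij : 0 < w i 0 + w j 0 by rewrite !wE; nra.
exists w => //; split.
  split; last by rewrite qformE.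
  by apply: contraTneq wij => ->; rewrite !mxE addr0 ltxx.
by rewrite /ij_witness !Aw Aui Auj !Av_eq0 // !mulr0 !subr0; split; [|split].
Qed.

Lemma ij_witness_minimal u : is_zero_of A u -> ij_witness A i j u ->
  exists u', is_minimal_zero A u' /\ ij_witness A i j u'.
Proof.
have [m] := ubnP #|supp u|; elim: m u => // m IH u supp_lt u_zero u_ij.
case: (classic (exists v, is_zero_of A v /\ supp v \proper supp u)) => [[v [v_zero vu]] | u_min].
  have [w [w_zero w_ij] wu] := ij_witness_shrink u_zero u_ij v_zero vu.
  by apply: (IH w) => //; apply: leq_trans (proper_card wu) _; rewrite -ltnS.
by exists u.
Qed.

End MinimalZeros.

Section Eij.
Variables (R : realFieldType) (n : nat) (i j : 'I_n).
Local Notation E := (Eij R i j).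

Lemma trmx_Eij : E^T = E.
Proof.
apply/matrixP => k l; rewrite !mxE; congr (_%:R).
by rewrite orbC (andbC (l == j)) (andbC (l == i)).
Qed.

Lemma Eij_ge0 k l : 0 <= E k l.
Proof. by rewrite mxE ler0n. Qed.

Lemma Eij_neq0 k l : E k l != 0 -> ((k == i) && (l == j)) || ((k == j) && (l == i)).
Proof. by rewrite mxE; case: (_ || _) => //=; rewrite eqxx. Qed.

Lemma Eij_mulmx_ge k l (u : 'cV[R]_n) : nonneg_vec u -> E k l * u l 0 <= (E *m u) k 0.
Proof.
move=> u_ge0; rewrite [X in _ <= X]mxE (bigD1 l) //= lerDl.
by apply: sumr_ge0 => m _; rewrite mulr_ge0 ?Eij_ge0.
Qed.

Lemma bform_Eij_ge0 (u : 'cV[R]_n) : nonneg_vec u -> 0 <= bform E u u.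
Proof.
move=> u_ge0; apply: sumr_ge0 => k _; rewrite mulr_ge0 // mxE.
by apply: sumr_ge0 => m _; rewrite mulr_ge0 ?Eij_ge0.
Qed.

End Eij.

Lemma irreducible_of_ij_witness (R : realFieldType) n (A : 'M[R]_n) i j u :
  copositive A -> is_zero_of A u -> ij_witness A i j u -> irreducible_wrt A (Eij R i j).
Proof.
move=> A_cop [_ [u_ge0 uAu]] [Aui [Auj uij]] [g [g_gt0 B_cop]].
set B := A - g *: Eij R i j in B_cop.
have uBu : bform B u u = 0.
  apply/le_anti/andP; split; last exact: copositive_form_ge0.
  rewrite bform_mxB bform_mxZ -qformE uAu sub0r oppr_le0.
  by apply: mulr_ge0; [exact: ltW | exact: bform_Eij_ge0].
have Bu_ge0 k : (A *m u) k 0 = 0 -> 0 <= - (g * (Eij R i j *m u) k 0).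
  move=> Auk; have := zero_mulmx_ge0 B_cop k u_ge0 uBu.
  by rewrite mulmxBl -scalemxAl entryB entryZ Auk sub0r.
have := Bu_ge0 i Aui; have := Bu_ge0 j Auj.
have := Eij_mulmx_ge i j j i u_ge0; have := Eij_mulmx_ge i j i j u_ge0.
rewrite [Eij R i j i j]mxE [Eij R i j j i]mxE !eqxx orbT /= !mul1r; nra.
Qed.

Lemma ij_witness_of_row_identity (R : realFieldType) n (A : 'M[R]_n) i j
    (S : {set 'I_n}) (w v : 'cV[R]_n) g :
  A^T = A -> supp w \subset S -> supp v \subset S -> nonneg_vec w -> w != 0 ->
  (forall k, k \in S -> (A *m w) k 0 = 0) ->
  (forall k, k \in S -> (A *m v) k 0 = g * (Eij R i j *m v) k 0 - 1) ->
  ij_witness A i j w.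
Proof.
move=> A_sym wS vS w_ge0 w_neq0 Aw Av.
(* w^T A v = 0, while the equations for v give w^T A v = g w^T E v - sum w. *)
have wAv : bform A w v = 0 by rewrite (bformC w v A_sym) (bform_supp vS Aw) mul0r.
have : bform A w v = g * (\sum_k w k 0 * (Eij R i j *m v) k 0) - \sum_k w k 0.
  rewrite /bform mulr_sumr -sumrB; apply: eq_bigr => k _.
  case: (boolP (k \in S)) => kS; first by rewrite Av //; ring.
  by rewrite (supp_subset_eq0 wS kS) !mul0r mulr0 subr0.
rewrite wAv => /eqP; rewrite eq_sym subr_eq0 => /eqP key.
have /sum_neq0P [k] : \sum_k w k 0 * (Eij R i j *m v) k 0 != 0.
  by apply: contraTneq (sum_col_gt0 w_ge0 w_neq0) => sum0; rewrite -key sum0 mulr0 ltxx.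
rewrite mulf_eq0 negb_or => /andP [wk]; rewrite mxE => /sum_neq0P [l].
rewrite mulf_eq0 negb_or => /andP [Ekl vl].
have kS : k \in S by apply: (subsetP wS); rewrite in_supp.
have lS : l \in S by apply: (subsetP vS); rewrite in_supp.
have wk_gt0 : 0 < w k 0 by rewrite lt0r wk w_ge0.
have := w_ge0 i; have := w_ge0 j.
by case/orP: (Eij_neq0 Ekl) => /andP [/eqP ki /eqP lj]; subst k l;
  rewrite /ij_witness !Aw //; split => //; split => //; lra.
Qed.

Section SupportSystemMatrix.
Variables (R : pzRingType) (n : nat) (S : {set 'I_n}).

(* [sysmx M *m y = sysrhs] says (M y)_k = -1 for k in S and y_k = 0 otherwise. *)
Definition sysmx (M : 'M[R]_n) : 'M[R]_n :=
  \matrix_(k, l) (if k \in S then M k l else (k == l)%:R).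

Definition sysrhs : 'cV[R]_n := \col_k (if k \in S then -1 else 0).

Lemma sysmx_mulE M (y : 'cV[R]_n) k :
  (sysmx M *m y) k 0 = if k \in S then (M *m y) k 0 else y k 0.
Proof.
rewrite mxE; case: ifP => kS; first by rewrite mxE; apply: eq_bigr => l _; rewrite mxE kS.
rewrite (bigD1 k) //= mxE kS eqxx mul1r big1 ?addr0 // => l lk.
by rewrite mxE kS eq_sym (negbTE lk) mul0r.
Qed.

End SupportSystemMatrix.

Arguments sysrhs {R n} S.

Lemma map_sysmx (R R' : pzRingType) n (S : {set 'I_n}) (f : {rmorphism R -> R'})
    (M : 'M[R]_n) :
  map_mx f (sysmx S M) = sysmx S (map_mx f M).
Proof. by apply/matrixP => k l; rewrite !mxE; case: ifP; rewrite ?rmorph_nat. Qed.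

Lemma map_sysrhs (R R' : pzRingType) n (S : {set 'I_n}) (f : {rmorphism R -> R'}) :
  map_mx f (sysrhs S : 'cV[R]_n) = sysrhs S.
Proof. by apply/matrixP => k l; rewrite !mxE; case: ifP; rewrite ?rmorphN1 ?rmorph0. Qed.

Section SupportSystem.
Variables (R : realFieldType) (n : nat).
Implicit Types (B : 'M[R]_n) (S : {set 'I_n}) (d x y z : 'cV[R]_n).

Definition regular_nonneg_sol S B y :=
  [/\ \det (sysmx S B) != 0, sysmx S B *m y = sysrhs S, nonneg_vec y & y != 0].

Lemma sysmx_kerP S B y : sysmx S B *m y = 0 ->
  supp y \subset S /\ forall k, k \in S -> (B *m y) k 0 = 0.
Proof.
move=> /matrixP ker; split.
  apply/subsetP => k; apply: contraTT => kS; rewrite in_supp negbK; apply/eqP.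
  by have := ker k 0; rewrite sysmx_mulE (negbTE kS) mxE.
by move=> k kS; have := ker k 0; rewrite sysmx_mulE kS => ->; rewrite mxE.
Qed.

Lemma sysmx_solP S B y : sysmx S B *m y = sysrhs S ->
  supp y \subset S /\ forall k, k \in S -> (B *m y) k 0 = -1.
Proof.
move=> /matrixP sol; split.
  apply/subsetP => k; apply: contraTT => kS; rewrite in_supp negbK; apply/eqP.
  by have := sol k 0; rewrite sysmx_mulE (negbTE kS) => ->; rewrite mxE (negbTE kS).
by move=> k kS; have := sol k 0; rewrite sysmx_mulE kS => ->; rewrite mxE kS.
Qed.

Lemma det0_colP (M : 'M[R]_n) : \det M = 0 -> exists2 z : 'cV[R]_n, z != 0 & M *m z = 0.
Proof.
rewrite -det_tr => /eqP /det0P [v v_neq0 vM]; exists v^T; first by rewrite trmx_eq0.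
by rewrite -(trmxK M) -trmx_mul vM trmx0.
Qed.

Lemma sum_colB x z c : \sum_k (x - c *: z) k 0 = (\sum_k x k 0) - c * \sum_k z k 0.
Proof. by rewrite mulr_sumr -sumrB; apply: eq_bigr => k _; rewrite entryB entryZ. Qed.

Lemma supp_subsetB x z c S : supp x \subset S -> supp z \subset S ->
  supp (x - c *: z) \subset S.
Proof.
move=> xS zS; apply/subsetP => k; apply: contraTT => kS; rewrite in_supp negbK entryB entryZ.
by rewrite !(supp_subset_eq0 _ kS) // mulr0 subr0.
Qed.

Section MinimalNegative.
Variables (B : 'M[R]_n) (x : 'cV[R]_n).
Hypotheses (B_sym : B^T = B) (x_ge0 : nonneg_vec x) (xBx_lt0 : bform B x x < 0).
Hypothesis x_min : forall p, nonneg_vec p -> supp p \proper supp x -> 0 <= bform B p p.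
Local Notation S := (supp x).

Lemma bform_zero_sum_gt0 d : supp d \subset S -> \sum_k d k 0 = 0 -> d != 0 ->
  0 < bform B d d.
Proof.
move=> dS sum0 d_neq0; rewrite ltNge; apply/negP => dBd_le0.
(* Leaving the orthant from x along d and along -d gives points of smaller support;
   the two resulting inequalities combine into (t1 + t2) (xBx + t1 t2 dBd) >= 0. *)
have exit e : supp e \subset S -> \sum_k e k 0 = 0 -> e != 0 ->
    exists2 t, 0 < t & 0 <= bform B x x + 2 * t * bform B x e + t * t * bform B e e.
  move=> eS sum_e e_neq0.
  have [t t_gt0 [xe_ge0 xe_lt]] := ray_exit x_ge0 eS (sum_col_eq0_neg sum_e e_neq0).
  by exists t => //; rewrite -bform_line // x_min.
have [t1 t1_gt0] := exit d dS sum0 d_neq0.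
have [|||t2 t2_gt0] := exit (- d); rewrite ?supp_opp ?oppr_eq0 //.
  by rewrite (eq_bigr (fun k => - d k 0)) => [|k _]; rewrite ?sumrN ?sum0 ?oppr0 // mxE.
rewrite bformNr bformNl bformNr opprK.
move: (bform B x x) (bform B x d) (bform B d d) xBx_lt0 dBd_le0 => q b c q_lt0 c_le0 h2 h1.
have : 0 <= t2 * (q + 2 * t1 * b + t1 * t1 * c) + t1 * (q + 2 * t2 * - b + t2 * t2 * c).
  by rewrite addr_ge0 // mulr_ge0 // ltW.
have -> : t2 * (q + 2 * t1 * b + t1 * t1 * c) + t1 * (q + 2 * t2 * - b + t2 * t2 * c)
    = (t1 + t2) * (q + t1 * t2 * c) by ring.
rewrite pmulr_rge0 ?addr_gt0 //.
have : t1 * t2 * c <= 0 by rewrite mulr_ge0_le0 // mulr_ge0 // ltW.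
lra.
Qed.

Lemma det_sysmx_neq0 : \det (sysmx S B) != 0.
Proof.
apply/eqP => /det0_colP [z z_neq0 /sysmx_kerP [zS Bz]].
have zBz : bform B z z = 0 by rewrite (bform_supp zS Bz) mul0r.
have xBz : bform B x z = 0 by rewrite (bform_supp (subxx _) Bz) mul0r.
have [sum0 | sum_neq0] := eqVneq (\sum_k z k 0) 0.
  by have := bform_zero_sum_gt0 zS sum0 z_neq0; rewrite zBz ltxx.
pose c : R := (\sum_k x k 0) / \sum_k z k 0.
set w := x - c *: z.
have wBw : bform B w w = bform B x x.
  by rewrite !bformBl !bformBr !bformZl !bformZr zBz (bformC z x B_sym) xBz; ring.
have w_neq0 : w != 0 by apply: contraTneq xBx_lt0 => w0; rewrite -wBw w0 bform0l ltxx.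
have sum_w : \sum_k w k 0 = 0 by rewrite sum_colB /c (divfK sum_neq0) subrr.
have := bform_zero_sum_gt0 (supp_subsetB _ (subxx _) zS) sum_w w_neq0.
by rewrite wBw ltNge (ltW xBx_lt0).
Qed.

Let y := invmx (sysmx S B) *m sysrhs S.
Let tau := \sum_k x k 0.
Let sig := \sum_k y k 0.
Let d := x - (tau / sig) *: y.

Let sysmx_sol : sysmx S B *m y = sysrhs S.
Proof. by rewrite mulKVmx // unitmxE unitfE det_sysmx_neq0. Qed.

Let x_neq0 : x != 0.
Proof. by apply: contraTneq xBx_lt0 => ->; rewrite bform0l ltxx. Qed.

Let sol_neq0 : y != 0.
Proof.
have [k xk] := col_neq0P x_neq0; have [_ By] := sysmx_solP sysmx_sol.
apply/eqP => y0; have := By k; rewrite in_supp xk y0 mulmx0 mxE => /(_ isT) /eqP.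
by rewrite eq_sym oppr_eq0 oner_eq0.
Qed.

Let bform_sol : bform B y y = - sig.
Proof. by have [yS By] := sysmx_solP sysmx_sol; rewrite (bform_supp yS By) mulN1r. Qed.

Let sum_sol_neq0 : sig != 0.
Proof.
apply/eqP => sig0; have [yS _] := sysmx_solP sysmx_sol.
by have := bform_zero_sum_gt0 yS sig0 sol_neq0; rewrite bform_sol sig0 oppr0 ltxx.
Qed.

Let supp_dev : supp d \subset S.
Proof. by have [yS _] := sysmx_solP sysmx_sol; apply: supp_subsetB. Qed.

Let sum_dev : \sum_k d k 0 = 0.
Proof. by rewrite sum_colB (divfK sum_sol_neq0) subrr. Qed.

Let bform_dev_sol : bform B d y = 0.
Proof. by have [_ By] := sysmx_solP sysmx_sol; rewrite (bform_supp supp_dev By) sum_dev mulr0. Qed.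

Let bform_dev_ge0 : 0 <= bform B d d.
Proof.
have [->|d_neq0] := eqVneq d 0; first by rewrite bform0l.
exact/ltW/bform_zero_sum_gt0/d_neq0/sum_dev/supp_dev.
Qed.

Let sol_dev_decomp : x = (tau / sig) *: y + d.
Proof. by rewrite /d addrC subrK. Qed.

Let bform_x_dev : bform B x d = bform B d d.
Proof.
have -> : bform B x d = bform B ((tau / sig) *: y + d) d by rewrite -sol_dev_decomp.
by rewrite bformDl bformZl (bformC y d B_sym) bform_dev_sol mulr0 add0r.
Qed.

Let sum_sol_gt0 : 0 < sig.
Proof.
have := xBx_lt0.
have -> : bform B x x = bform B ((tau / sig) *: y + d) ((tau / sig) *: y + d).
  by rewrite -sol_dev_decomp.
rewrite bform_add_orth // bform_sol.
have := bform_dev_ge0; move: (tau / sig) (bform B d d) => c e e_ge0.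
have := sqr_ge0 c; rewrite expr2; nra.
Qed.

Let sol_ge0 : nonneg_vec y.
Proof.
move=> k; rewrite leNgt; apply/negP => yk_lt0.
(* Then x leaves the orthant towards the rescaled solution at some t < 1, where
   the form is xBx - t (2 - t) dBd < 0, against the minimality of x. *)
have c_gt0 : 0 < tau / sig.
  by apply: divr_gt0; [exact: sum_col_gt0 x_ge0 x_neq0 | exact: sum_sol_gt0].
have dk_lt0 : (- d) k 0 < 0.
  by rewrite mxE entryB entryZ opprB subr_lt0 (lt_le_trans _ (x_ge0 k)) // pmulr_rlt0.
have dS : supp (- d) \subset S by rewrite supp_opp supp_dev.
have [t t_gt0 [xt_ge0 xt_lt]] := ray_exit x_ge0 dS (ex_intro _ k dk_lt0).
have t_lt1 : t < 1.
  have := xt_ge0 k; rewrite entryD entryZ mxE entryB entryZ opprB.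
  move: dk_lt0; rewrite mxE entryB entryZ opprB => dk_lt0.
  have : tau / sig * y k 0 < 0 by rewrite pmulr_rlt0.
  have := x_ge0 k; move: (x k 0) (tau / sig * y k 0) => a b; nra.
have := x_min xt_ge0 xt_lt.
rewrite bform_line // bformNr bformNl bformNr opprK bform_x_dev.
have : 0 <= t * (2 - t) by rewrite mulr_ge0 ?subr_ge0 ?ltW //; lra.
have := bform_dev_ge0; have := xBx_lt0; move: (bform B x x) (bform B d d) => q e; nra.
Qed.

Lemma regular_nonneg_sol_minimal : regular_nonneg_sol S B y.
Proof. by split; [exact: det_sysmx_neq0 | exact: sysmx_sol | exact: sol_ge0 | exact: sol_neq0]. Qed.

End MinimalNegative.

Lemma neg_form_regular_sol B x : B^T = B -> nonneg_vec x -> bform B x x < 0 ->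
  exists S y, regular_nonneg_sol S B y.
Proof.
move=> B_sym; have [m] := ubnP #|supp x|; elim: m x => // m IH x supp_lt x_ge0 xBx_lt0.
case: (classic (exists p, [/\ nonneg_vec p, bform B p p < 0 & supp p \proper supp x])).
  move=> [p [p_ge0 pBp_lt0 px]]; apply: (IH p) => //.
  by apply: leq_trans (proper_card px) _; rewrite -ltnS.
move=> x_min; exists (supp x), (invmx (sysmx (supp x) B) *m sysrhs (supp x)).
apply: regular_nonneg_sol_minimal => // p p_ge0 px; rewrite leNgt; apply/negP => pBp.
by apply: x_min; exists p.
Qed.

End SupportSystem.

Lemma coef_polyC_mulmx (R : nzRingType) n (B : 'M[R]_n) (v : 'cV[{poly R}]_n) m k :
  ((map_mx polyC B *m v) k 0)`_m = (B *m \col_l (v l 0)`_m) k 0.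
Proof. by rewrite !mxE coef_sum; apply: eq_bigr => l _; rewrite !mxE coefCM. Qed.

Lemma horner_polyC_mulmx (R : comNzRingType) n (B : 'M[R]_n) (v : 'cV[{poly R}]_n) g k :
  ((map_mx polyC B *m v) k 0).[g] = (B *m map_mx (horner_eval g) v) k 0.
Proof. by rewrite !mxE horner_sum; apply: eq_bigr => l _; rewrite !mxE hornerCM horner_evalE. Qed.

Lemma vanish_below_polyC_mulmx (R : realFieldType) n (B : 'M[R]_n) (v : 'cV[{poly R}]_n) m :
  (forall l, vanish_below (v l 0) m) -> forall k, vanish_below ((map_mx polyC B *m v) k 0) m.
Proof.
move=> v_low k a a_lt; rewrite coef_polyC_mulmx mxE big1 // => l _.
by rewrite [X in _ * X]mxE v_low // mulr0.
Qed.

Section CramerPolynomials.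
Variables (R : realFieldType) (n : nat) (A : 'M[R]_n) (i j : 'I_n) (S : {set 'I_n}).
Local Notation E := (Eij R i j).
Local Notation NX := (sysmx S (map_mx polyC A - 'X *: map_mx polyC E)).
Local Notation DX := (\det NX).
(* At a regular g, p evaluates to det^2 y rather than det y, hence is nonnegative. *)
Local Notation p := (DX *: (\adj NX *m sysrhs S)).

Lemma eval_sysmxX g : map_mx (horner_eval g) NX = sysmx S (A - g *: E).
Proof.
rewrite map_sysmx; congr sysmx; apply/matrixP => k l.
by rewrite !mxE /= horner_evalE hornerD hornerN hornerM hornerX !hornerC.
Qed.

Lemma sysmxX_mul : NX *m p = (DX * DX) *: sysrhs S.
Proof. by rewrite -scalemxAr mulmxA mul_mx_adj mul_scalar_mx scalerA. Qed.

Lemma cramer_out k : k \notin S -> p k 0 = 0.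
Proof.
move=> kS; have /matrixP/(_ k 0) := sysmxX_mul.
by rewrite sysmx_mulE (negbTE kS) => ->; rewrite entryZ mxE (negbTE kS) mulr0.
Qed.

Lemma cramer_row k : k \in S ->
  (map_mx polyC A *m p) k 0 = 'X * (map_mx polyC E *m p) k 0 - DX * DX.
Proof.
move=> kS; have /matrixP/(_ k 0) := sysmxX_mul.
rewrite sysmx_mulE kS mulmxBl -scalemxAl entryB !entryZ [sysrhs S k 0]mxE kS.
by rewrite mulrN1 => /eqP; rewrite subr_eq => /eqP ->; rewrite addrC.
Qed.

Lemma horner_det_sysmxX g : DX.[g] = \det (sysmx S (A - g *: E)).
Proof. by rewrite -horner_evalE -det_map_mx eval_sysmxX. Qed.

Lemma eval_cramer g y : sysmx S (A - g *: E) *m y = sysrhs S ->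
  map_mx (horner_eval g) p = (DX * DX).[g] *: y.
Proof.
move=> sol; rewrite map_mxZ map_mxM map_mx_adj eval_sysmxX map_sysrhs -sol mulmxA.
by rewrite mul_adj_mx mul_scalar_mx scalerA /= horner_evalE hornerM horner_det_sysmxX.
Qed.

Lemma horner_cramer g y k : sysmx S (A - g *: E) *m y = sysrhs S ->
  (p k 0).[g] = (DX * DX).[g] * y k 0.
Proof.
move=> sol; transitivity ((map_mx (horner_eval g) p) k 0); first by rewrite [RHS]mxE.
by rewrite (eval_cramer sol) mxE.
Qed.

Section SmallSolutions.
Local Notation G g := (exists y, regular_nonneg_sol S (A - g *: E) y).
Hypothesis A_cop : copositive A.
Hypothesis small : arbitrarily_small (fun g => G g).
Local Notation Q := (\sum_k p k 0).
Local Notation r := (\sum_k p k 0 * (map_mx polyC E *m p) k 0).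

Lemma cramer_form :
  \sum_k p k 0 * (map_mx polyC A *m p) k 0 = 'X * r - DX * DX * Q.
Proof.
have row k : p k 0 * (map_mx polyC A *m p) k 0
    = 'X * (p k 0 * (map_mx polyC E *m p) k 0) - DX * DX * p k 0.
  case: (boolP (k \in S)) => kS; first by rewrite cramer_row //; ring.
  by rewrite cramer_out // !mul0r !mulr0 subr0.
by rewrite (eq_bigr _ (fun k _ => row k)) sumrB -!mulr_sumr.
Qed.

Lemma cramer_eval_ge0 g k : G g -> 0 <= (p k 0).[g].
Proof.
move=> [y [_ sol y_ge0 _]].
by rewrite (horner_cramer _ sol) mulr_ge0 // hornerM -expr2 sqr_ge0.
Qed.

Lemma cramer_det2_gt0 g : G g -> 0 < (DX * DX).[g].
Proof.
move=> [y [det_neq0 _ _ _]].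
by rewrite hornerM horner_det_sysmxX lt0r mulf_neq0 //= -expr2 sqr_ge0.
Qed.

Lemma cramer_sum_neq0 : Q != 0.
Proof.
have [g [_ _ [y ysol]]] := small ltr01.
have [_ sol y_ge0 y_neq0] := ysol.
apply/eqP => Q0; have := congr1 (horner^~ g) Q0; rewrite horner0 horner_sum /=.
under eq_bigr do rewrite (horner_cramer _ sol).
rewrite -mulr_sumr => /eqP; apply/negP; rewrite mulf_neq0 //.
  by rewrite gt_eqF // cramer_det2_gt0 //; exists y.
by rewrite gt_eqF // sum_col_gt0.
Qed.

Lemma cramer_dominated g : G g -> 0 <= ('X * r - DX * DX * Q).[g].
Proof.
move=> G_g; rewrite -cramer_form horner_sum.
have pg_ge0 : nonneg_vec (map_mx (horner_eval g) p).
  by move=> k; rewrite mxE /= horner_evalE cramer_eval_ge0.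
have := copositive_form_ge0 A_cop pg_ge0; rewrite /bform.
by under eq_bigr do rewrite -horner_polyC_mulmx mxE /= horner_evalE -hornerM.
Qed.

Lemma cramer_lowest : exists m, [/\ forall k, vanish_below (p k 0) m,
  nonneg_vec (\col_k (p k 0)`_m), 0 < Q`_m & vanish_below (DX * DX) m.+1].
Proof.
have [m [p_low pm_ge0 Qm_gt0]] :=
  lowest_common_order small cramer_eval_ge0 cramer_sum_neq0.
have Q_low : vanish_below Q m.
  by move=> a a_lt; rewrite coef_sum big1 // => k _; apply: p_low.
have Ep_low := vanish_below_polyC_mulmx E p_low.
have r_low : vanish_below r (m + m).
  move=> a a_lt; rewrite coef_sum big1 // => k _.
  by have [low _] := vanish_belowM (p_low k) (Ep_low k); apply: low.
exists m; split => //; first by move=> k; rewrite mxE.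
apply: (vanish_below_dominated small Q_low Qm_gt0 r_low) => [g G_g|]; last exact: cramer_dominated.
exact/ltW/cramer_det2_gt0.
Qed.

Lemma ij_witness_of_small_sols : exists w, is_zero_of A w /\ ij_witness A i j w.
Proof.
have [m [p_low w_ge0 Qm_gt0 D2_low]] := cramer_lowest.
set w := \col_k (p k 0)`_m in w_ge0.
have wS : supp w \subset S.
  apply/subsetP => k; apply: contraTT => kS.
  by rewrite in_supp negbK mxE cramer_out // coef0.
have Aw k : k \in S -> (A *m w) k 0 = 0.
  move=> kS; rewrite -coef_polyC_mulmx cramer_row // coefB coefXM D2_low // subr0.
  (* coefficient m of X q is q_(m-1), and q vanishes below m *)
  case: m p_low {w w_ge0 wS Qm_gt0 D2_low} => // m p_low.
  by rewrite (vanish_below_polyC_mulmx E p_low).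
have w_neq0 : w != 0.
  apply: contraTneq Qm_gt0 => w0; rewrite coef_sum big1 ?ltxx // => k _.
  by move/matrixP/(_ k 0): w0; rewrite [LHS]mxE [RHS]mxE.
have [g [_ _ [y [_ sol y_ge0 y_neq0]]]] := small ltr01.
have [yS By] := sysmx_solP sol.
exists w; split; first by split => //; split => //; rewrite qformE (bform_supp wS Aw) mul0r.
apply: (ij_witness_of_row_identity A_cop.1 wS yS w_ge0 w_neq0 Aw) => k kS.
have := By k kS; rewrite mulmxBl -scalemxAl entryB entryZ.
by move/eqP; rewrite subr_eq => /eqP ->; rewrite addrC.
Qed.

End SmallSolutions.

End CramerPolynomials.

Lemma ij_witness_of_irreducible (R : realFieldType) n (A : 'M[R]_n) i j :
  copositive A -> irreducible_wrt A (Eij R i j) ->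
  exists w, is_zero_of A w /\ ij_witness A i j w.
Proof.
move=> A_cop irr.
have sols g : 0 < g -> exists S y, regular_nonneg_sol S (A - g *: Eij R i j) y.
  move=> g_gt0; have B_sym : (A - g *: Eij R i j)^T = A - g *: Eij R i j.
    by rewrite linearB linearZ /= A_cop.1 trmx_Eij.
  have [x [x_ge0 xBx_lt0]] : exists x, nonneg_vec x /\ bform (A - g *: Eij R i j) x x < 0.
    apply: NNPP => no_x; apply: irr; exists g; split => //; split => // x x_ge0.
    by rewrite qformE leNgt; apply/negP => xBx_lt0; apply: no_x; exists x.
  exact: neg_form_regular_sol B_sym x_ge0 xBx_lt0.
have [S small] := arbitrarily_small_pigeonhole sols.
exact: ij_witness_of_small_sols A_cop small.
Qed.

Theorem lemma4p1 (R : realFieldType) (n : nat) (A : 'M[R]_n) (i j : 'I_n) :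
  copositive A ->
  (irreducible_wrt A (Eij R i j) <->
   exists u : 'cV[R]_n,
     is_minimal_zero A u /\ (A *m u) i 0 = 0 /\ (A *m u) j 0 = 0 /\ 0 < u i 0 + u j 0).
Proof.
move=> A_cop; split.
  move=> /(ij_witness_of_irreducible A_cop) [w [w_zero w_ij]].
  by have [u [u_min u_ij]] := ij_witness_minimal A_cop w_zero w_ij; exists u.
by move=> [u [[u_zero _] u_ij]]; exact: irreducible_of_ij_witness A_cop u_zero u_ij.
Qed.
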